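(* Let $k\geq 0$ be fixed. There are constants $c_1$ and $q^*_k$ (depending on $k$) such that for all $q\geq q^*_k$ the following holds: if $\vec{x}=(x_0,\ldots,x_k)$ is a vector of nonnegative integers with $wt_q(\vec{x})\geq 2^q+c_1\binom{q}{k}$, then Paul has a winning strategy in the $q$-round pathological liar game with $k$ lies and initial state $\vec{x}$.
   Context: Pathological liar game: a state is a vector $\vec{x}=(x_0,\ldots,x_k)$ of nonnegative integers. In each of $q$ rounds Paul chooses a legal question $\vec{a}=(a_0,\ldots,a_k)$ with integers $0\leq a_i\leq x_i$, and Carole answers Y or N; the new state is $Y(\vec{x},\vec{a})=(a_0,\,a_1+x_0-a_0,\,\ldots,\,a_k+x_{k-1}-a_{k-1})$ or $N(\vec{x},\vec{a})=(x_0-a_0,\,x_1-a_1+a_0,\,\ldots,\,x_k-a_k+a_{k-1})$ respectively. Paul wins iff after $q$ rounds $\sum_i x_i\geq 1$. Weight: $wt_q(\vec{x})=\sum_{i=0}^k x_i\binom{q}{\leq k-i}$ where $\binom{q}{\leq m}=\sum_{j=0}^m\binom{q}{j}$. *)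

From mathcomp Require Import all_boot.
Set Implicit Arguments. Unset Strict Implicit. Unset Printing Implicit Defensive.

Definition state (k : nat) := {ffun 'I_k.+1 -> nat}.

Definition legal k (x a : state k) : Prop := forall i, a i <= x i.

Definition Yst k (x a : state k) : state k :=
  [ffun i : 'I_k.+1 =>
     if val i is j.+1 then a i + (x (inord j) - a (inord j)) else a i].

Definition Nst k (x a : state k) : state k :=
  [ffun i : 'I_k.+1 =>
     if val i is j.+1 then x i - a i + a (inord j) else x i - a i].

(* Paul wins the q-round pathological liar game from x (Carole answering
   adversarially): after q rounds, sum_i x_i >= 1. *)
Fixpoint paul_wins k (q : nat) (x : state k) : Prop :=
  match q with
  | 0 => 1 <= \sum_(i < k.+1) x i
  | q'.+1 => exists a : state k, legal x a /\
               paul_wins q' (Yst x a) /\ paul_wins q' (Nst x a)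
  end.

Definition binom_le (q m : nat) : nat := \sum_(j < m.+1) 'C(q, j).

Definition wt k (q : nat) (x : state k) : nat :=
  \sum_(i < k.+1) x i * binom_le q (k - i).

From mathcomp Require Import all_boot zify.
Set Implicit Arguments. Unset Strict Implicit. Unset Printing Implicit Defensive.

(* The weight is conserved by every question, [wt_(r+1) x = wt_r Y + wt_r N], and
   Paul has won when [wt_0 >= 1]; so it suffices to keep [wt_r >= 2 ^ r] by splitting
   the weight evenly.  A chip at level [k] weighs [1] on exactly one side, so enough
   of them can correct any imbalance.  After discarding chips until the weight is
   [2 ^ q + O(binom(q, <= k))], Paul first halves every level for [k] rounds: the
   state stays close to the ideal trajectory of exact halving, along which level [k]
   receives a fixed fraction of all chips.  He then keeps halving the lower levels
   and balances with level [k]; the ideal trajectory guarantees that level [k] keeps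
   more than [binom(r, <= k)] chips, enough to absorb the rounding, as long as [r]
   is larger than a constant [R1].  Then only boundedly many chips remain below
   level [k]; Paul moves one of them per round, so that whatever the answer the low
   chips lose lies, until a single low chip is left, after which level [k] alone
   balances every split. *)

(** * Partial sums of binomial coefficients *)

Lemma binom_le0 r : binom_le r 0 = 1.
Proof. by rewrite /binom_le big_ord_recl big_ord0 bin0. Qed.

Lemma binom_le0n m : binom_le 0 m = 1.
Proof. by rewrite /binom_le big_ord_recl bin0 big1. Qed.

Lemma binom_le_gt0 r m : 0 < binom_le r m.
Proof. by rewrite /binom_le big_ord_recl bin0. Qed.

Lemma binom_le_recr r m : binom_le r m.+1 = binom_le r m + 'C(r, m.+1).
Proof. by rewrite /binom_le big_ord_recr. Qed.

Lemma binom_leS r m : binom_le r.+1 m.+1 = binom_le r m.+1 + binom_le r m.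
Proof.
rewrite /binom_le big_ord_recl [X in _ = X + _]big_ord_recl !bin0 -addnA.
by congr (_ + _); rewrite -big_split; apply: eq_bigr => i _; rewrite binS.
Qed.

Lemma binom_le_exp2 r m : binom_le r m <= 2 ^ r.
Proof.
elim: r m => [|r IHr] [|m]; rewrite ?binom_le0n ?binom_le0 ?expn_gt0 //.
by rewrite binom_leS expnS mul2n -addnn leq_add.
Qed.

Lemma leq_binom_le2r r m1 m2 : m1 <= m2 -> binom_le r m1 <= binom_le r m2.
Proof.
move=> le_m12; rewrite /binom_le -(subnKC le_m12) -addSn big_split_ord.
exact: leq_addr.
Qed.

Lemma leq_binom_le2l r1 r2 m : r1 <= r2 -> binom_le r1 m <= binom_le r2 m.
Proof.
move=> /subnKC <-; elim: (r2 - r1) => [|d IHd]; rewrite ?addn0 // addnS.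
apply: leq_trans IHd _; case: m => [|m]; rewrite ?binom_le0 // binom_leS.
exact: leq_addr.
Qed.

Lemma binom_leD t r m : binom_le (t + r) m <= binom_le t m * binom_le r m.
Proof.
elim: t m => [|t IHt] [|m]; rewrite ?binom_le0 ?binom_le0n ?mul1n //.
rewrite addSn !binom_leS mulnDl leq_add // (leq_trans (IHt m)) //.
by rewrite leq_mul // leq_binom_le2r.
Qed.

Lemma binom_le_bin t m : m <= t -> binom_le t m <= 2 ^ m * 'C(t, m).
Proof.
elim: t m => [|t IHt] [|m] le_mt; rewrite ?binom_le0 ?bin0 //.
have le2 : binom_le t m <= 2 ^ m.+1 * 'C(t, m).
  by apply: leq_trans (IHt m le_mt) _; rewrite leq_mul // leq_exp2l.
rewrite binom_leS binS mulnDr; case: (ltnP m t) => [lt_mt | le_tm].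
  by rewrite leq_add ?IHt.
have -> : m = t by apply/eqP; rewrite eqn_leq le_tm andbT; exact: le_mt.
rewrite binom_le_recr bin_small // binn addn0 muln0 add0n muln1 expnS mul2n -addnn.
by have := IHt t (leqnn t); rewrite binn muln1 => le_t; rewrite leq_add.
Qed.

Lemma binom_le_ratio t m : (t - m) * binom_le t m <= m.+1 * binom_le t m.+1.
Proof.
rewrite /binom_le (big_ord_recl m.+1) mulnDr !big_distrr /=.
apply: leq_trans (leq_addl _ _); apply: leq_sum => i _; rewrite /bump add1n.
have le_im : i <= m by rewrite -ltnS.
apply: (@leq_trans ((t - i) * 'C(t, i))); first by rewrite leq_mul ?leq_sub2l.
by rewrite -mul_bin_left leq_mul.
Qed.

Lemma binom_le_ratio_ge c r m : c * m.+1 <= r - m -> c * binom_le r m <= binom_le r m.+1.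
Proof.
move=> le_cm; rewrite -(leq_pmul2l (ltn0Sn m)) (leq_trans _ (binom_le_ratio r m)) //.
by rewrite mulnA [m.+1 * c]mulnC leq_mul2r le_cm orbT.
Qed.

Lemma sum_bin_rev r k : \sum_(i < k) 'C(r, k - i) + 1 = binom_le r k.
Proof.
rewrite /binom_le -(big_mkord xpredT (fun j => 'C(r, j))) big_rev_mkord subn0.
by rewrite big_ord_recr /= subnn bin0.
Qed.

Lemma binom_le_poly r k : binom_le r k <= r.+1 ^ k.
Proof.
elim: r k => [|r IHr] [|k]; rewrite ?binom_le0n ?binom_le0 ?exp1n ?expn_gt0 //.
have le_pow : r.+1 ^ k <= r.+2 ^ k by case: k => // k; rewrite leq_exp2r.
rewrite binom_leS expnS mulSn addnC leq_add ?(leq_trans (IHr k)) //.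
by rewrite (leq_trans (IHr k.+1)) // expnS leq_mul.
Qed.

Lemma exp2_dominates_poly d A : exists R, forall s, R <= s -> A * s.+1 ^ d <= 2 ^ s.
Proof.
elim: d A => [|d IHd] A.
  by exists A => s le_As; rewrite muln1 (leq_trans le_As) // ltnW // ltn_expl.
have [R leR] := IHd (A * 2 ^ d.+1).
exists R.*2.+2 => s le_Rs; set u := s./2.
have le_su : s.+1 <= u.+1 * 2 by rewrite -{1}(odd_double_half s); case: odd; lia.
have le_Ru : R.+1 <= u by rewrite -(doubleK R.+1) half_leq.
apply: (@leq_trans (A * 2 ^ d.+1 * u.+1 ^ d * u.+1)).
  by rewrite -!mulnA leq_mul2l -expnSr -expnMn mulnC leq_exp2r ?le_su ?orbT.
apply: (@leq_trans (2 ^ u * 2 ^ u)).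
  by apply: leq_mul; [exact: leR (ltnW le_Ru) | exact: ltn_expl].
by rewrite -expnD leq_exp2l // addnn; have := odd_double_half s; lia.
Qed.

Lemma exp2_dominates_binom_le A k :
  exists R, forall s, R <= s -> A * binom_le s k ^ 2 <= 2 ^ s.
Proof.
have [R leR] := exp2_dominates_poly (k * 2) A.
exists R => s /leR; apply: leq_trans.
by rewrite leq_mul2l expnM leq_exp2r ?binom_le_poly ?orbT.
Qed.

(** * The game and the weight *)

(* States are coded as functions [nat -> nat] of which only the values at [0..k]
   matter; [paul_wins_of_wins] transfers winning back to [state k]. *)
Definition yes_state (f g : nat -> nat) : nat -> nat :=
  fun i => if i is j.+1 then g i + (f j - g j) else g 0.

Definition no_state (f g : nat -> nat) : nat -> nat :=
  fun i => if i is j.+1 then f i - g i + g j else f 0 - g 0.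

Fixpoint wins k q (f : nat -> nat) : Prop :=
  match q with
  | 0 => 1 <= \sum_(i < k.+1) f i
  | q'.+1 => exists g : nat -> nat, (forall i, i <= k -> g i <= f i) /\
               wins k q' (yes_state f g) /\ wins k q' (no_state f g)
  end.

Lemma wins_mono k q f f' :
  (forall i, i <= k -> f i <= f' i) -> wins k q f -> wins k q f'.
Proof.
elim: q f f' => [|q IHq] f f' le_ff' /=.
  by move=> /leq_trans; apply; apply: leq_sum => i _; rewrite le_ff' // -ltnS.
move=> [g [le_gf [wY wN]]]; exists g; split.
  by move=> i le_ik; rewrite (leq_trans (le_gf i le_ik)) ?le_ff'.
split; [apply: IHq wY | apply: IHq wN] => -[|i] le_ik //=.
- by rewrite leq_add2l leq_sub2r // le_ff' // ltnW.
- by rewrite leq_sub2r ?le_ff'.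
- by rewrite leq_add2r leq_sub2r ?le_ff'.
Qed.

Lemma paul_wins_of_wins k q (x : state k) :
  wins k q (fun i => x (inord i)) -> paul_wins q x.
Proof.
have val_inord i : i <= k -> (@inord k i : nat) = i by move=> le_ik; rewrite inordK.
elim: q x => [|q IHq] x /=.
  by under eq_bigr => i _ do rewrite inord_val.
move=> [g [le_gx [wY wN]]]; exists [ffun i : 'I_k.+1 => g i]; split.
  by move=> i; rewrite ffunE; have := le_gx i; rewrite inord_val; apply; rewrite -ltnS.
split; apply: IHq; [apply: wins_mono wY | apply: wins_mono wN] => -[|i] le_ik;
  by rewrite /Yst /Nst !ffunE /= !val_inord //= ?ffunE ?val_inord // ltnW.
Qed.

Lemma sum_muln1 n (f : nat -> nat) : \sum_(i < n) f i = \sum_(i < n) f i * 1.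
Proof. by apply: eq_bigr => i _; rewrite muln1. Qed.

Lemma sum_subnKC n (f g c : nat -> nat) : (forall i, i < n -> g i <= f i) ->
  \sum_(i < n) f i * c i = \sum_(i < n) g i * c i + \sum_(i < n) (f i - g i) * c i.
Proof.
by move=> le_gf; rewrite -big_split; apply: eq_bigr => i _ /=; rewrite -mulnDl subnKC ?le_gf.
Qed.

Lemma sum_yes_state k f g (c : nat -> nat) :
  \sum_(i < k.+1) yes_state f g i * c i =
  \sum_(i < k.+1) g i * c i + \sum_(i < k) (f i - g i) * c i.+1.
Proof.
rewrite big_ord_recl [in RHS]big_ord_recl -addnA; congr (_ + _).
by rewrite -big_split; apply: eq_bigr => i _; rewrite mulnDl.
Qed.

Lemma sum_no_state k f g (c : nat -> nat) :
  \sum_(i < k.+1) no_state f g i * c i =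
  \sum_(i < k.+1) (f i - g i) * c i + \sum_(i < k) g i * c i.+1.
Proof.
rewrite big_ord_recl [in RHS]big_ord_recl -addnA; congr (_ + _).
by rewrite -big_split; apply: eq_bigr => i _; rewrite mulnDl.
Qed.

Definition weight k r (f : nat -> nat) := \sum_(i < k.+1) f i * binom_le r (k - i).

Lemma wt_weight k q (x : state k) : wt q x = weight k q (fun i => x (inord i)).
Proof. by apply: eq_bigr => i _; rewrite inord_val. Qed.

Lemma weight0 k f : weight k 0 f = \sum_(i < k.+1) f i.
Proof. by apply: eq_bigr => i _; rewrite binom_le0n muln1. Qed.

Lemma weight_top k r f : weight k r f = \sum_(i < k) f i * binom_le r (k - i) + f k.
Proof. by rewrite /weight big_ord_recr /= subnn binom_le0 muln1. Qed.

Lemma sum_le_weight k r (x : nat -> nat) : \sum_(i < k.+1) x i <= weight k r x.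
Proof. by apply: leq_sum => i _; rewrite leq_pmulr ?binom_le_gt0. Qed.

Lemma weight_le_sum k r (x : nat -> nat) : weight k r x <= binom_le r k * \sum_(j < k.+1) x j.
Proof.
rewrite big_distrr; apply: leq_sum => j _.
by rewrite mulnC leq_mul2r leq_binom_le2r ?leq_subr ?orbT.
Qed.

Lemma weight_succ_ge k c r (x : nat -> nat) :
  k.+1 * c.+1 <= r -> c * weight k r x <= weight k.+1 r x.
Proof.
move=> large; rewrite /weight big_distrr [leqRHS]big_ord_recr /=.
apply: leq_trans (leq_addr _ _); apply: leq_sum => i _.
have le_ik : i <= k by rewrite -ltnS.
rewrite subSn // mulnCA leq_mul2l binom_le_ratio_ge ?orbT //.
have : k - i <= k := leq_subr i k; nia.
Qed.

Definition low_yes k r (f g : nat -> nat) :=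
  \sum_(i < k) (g i * binom_le r (k - i) + (f i - g i) * binom_le r (k - i.+1)).

Definition low_no k r (f g : nat -> nat) :=
  \sum_(i < k) ((f i - g i) * binom_le r (k - i) + g i * binom_le r (k - i.+1)).

Lemma weight_yes_state k r f g :
  weight k r (yes_state f g) = low_yes k r f g + g k.
Proof.
rewrite /weight (sum_yes_state _ _ _ (fun i => binom_le r (k - i))).
rewrite big_ord_recr /= subnn binom_le0 muln1.
by rewrite /low_yes big_split addnAC.
Qed.

Lemma weight_no_state k r f g :
  weight k r (no_state f g) = low_no k r f g + (f k - g k).
Proof.
rewrite /weight (sum_no_state _ _ _ (fun i => binom_le r (k - i))).
rewrite big_ord_recr /= subnn binom_le0 muln1.
by rewrite /low_no big_split addnAC.
Qed.

Lemma weightS_low k r f g : (forall i, i < k -> g i <= f i) ->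
  weight k r.+1 f = low_yes k r f g + low_no k r f g + f k.
Proof.
move=> le_gf; rewrite weight_top -big_split; congr (_ + _); apply: eq_bigr => i _.
have lt_ik := ltn_ord i; rewrite -(subnSK lt_ik) binom_leS /= addnACA -!mulnDl.
by rewrite subnKC ?subnK ?le_gf // -mulnDr.
Qed.

Lemma weightS_yes_no k r f g : (forall i, i <= k -> g i <= f i) ->
  weight k r.+1 f = weight k r (yes_state f g) + weight k r (no_state f g).
Proof.
move=> le_gf; rewrite (@weightS_low k r f g) => [|i /ltnW]; last exact: le_gf.
by rewrite weight_yes_state weight_no_state addnACA subnKC ?le_gf ?addnA.
Qed.

Definition upd (g : nat -> nat) (j v : nat) : nat -> nat :=
  fun i => if i == j then v else g i.

Lemma upd_top_le k (f g : nat -> nat) v :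
  (forall i, i < k -> g i <= f i) -> v <= f k -> forall i, i <= k -> upd g k v i <= f i.
Proof.
move=> le_gf le_v i le_ik; rewrite /upd; case: eqP => [-> //|/eqP ne_ik].
by rewrite le_gf // ltn_neqAle ne_ik.
Qed.

Lemma upd_ord k g v (i : 'I_k) : upd g k v i = g i.
Proof. by rewrite /upd ltn_eqF. Qed.

Lemma sum_upd_ord k g v (F : nat -> nat -> nat) :
  \sum_(i < k) F i (upd g k v i) = \sum_(i < k) F i (g i).
Proof. by apply: eq_bigr => i _; rewrite upd_ord. Qed.

Lemma low_yes_upd k r f g v : low_yes k r f (upd g k v) = low_yes k r f g.
Proof. by apply: eq_bigr => i _; rewrite upd_ord. Qed.

Lemma low_no_upd k r f g v : low_no k r f (upd g k v) = low_no k r f g.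
Proof. by apply: eq_bigr => i _; rewrite upd_ord. Qed.

Lemma split_top a b c h : h <= a + c -> h <= b + c -> 2 * h <= a + b + c ->
  exists2 v, v <= c & h <= a + v /\ h <= b + (c - v).
Proof. by move=> *; exists (h - a); lia. Qed.

Lemma wins_step k r f g v : (forall i, i < k -> g i <= f i) -> v <= f k ->
  wins k r (yes_state f (upd g k v)) -> wins k r (no_state f (upd g k v)) ->
  wins k r.+1 f.
Proof. by move=> le_gf le_v wY wN; exists (upd g k v); split; first exact: upd_top_le. Qed.

Lemma wins_split k r f g h : (forall i, i < k -> g i <= f i) ->
    h <= low_yes k r f g + f k -> h <= low_no k r f g + f k ->
    2 * h <= weight k r.+1 f ->
  (forall v, v <= f k -> h <= weight k r (yes_state f (upd g k v)) ->
     wins k r (yes_state f (upd g k v))) ->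
  (forall v, v <= f k -> h <= weight k r (no_state f (upd g k v)) ->
     wins k r (no_state f (upd g k v))) ->
  wins k r.+1 f.
Proof.
move=> le_gf hY hN; rewrite (weightS_low _ le_gf) => h2 wY wN.
have [v le_v [hYv hNv]] := split_top hY hN h2.
apply: (wins_step le_gf le_v); [apply: wY | apply: wN];
  by rewrite ?weight_yes_state ?weight_no_state ?low_yes_upd ?low_no_upd /upd ?eqxx.
Qed.

Lemma sum_pos_exists n (f : nat -> nat) : 0 < \sum_(i < n) f i -> exists j : 'I_n, 0 < f j.
Proof.
case: (pickP (fun j : 'I_n => 0 < f j)) => [j pos_j _ | none]; first by exists j.
by rewrite big1 // => i _; apply/eqP; rewrite -leqn0 leqNgt none.
Qed.

Definition drop_chip (f : nat -> nat) (j : nat) : nat -> nat := fun i => f i - (i == j).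

Lemma drop_chip_le f j i : drop_chip f j i <= f i.
Proof. exact: leq_subr. Qed.

Lemma sum_drop_chip n (f : nat -> nat) (j : 'I_n) (c : nat -> nat) : 0 < f j ->
  \sum_(i < n) (f i - drop_chip f j i) * c i = c j.
Proof.
move=> pos_j; rewrite (bigD1 j) //= big1 => [|i ne_ij].
  by rewrite /drop_chip eqxx /= subKn // mul1n addn0.
by move: ne_ij; rewrite /drop_chip -val_eqE => /negbTE ->; rewrite subn0 subnn.
Qed.

Lemma sum_drop_chip1 n (f : nat -> nat) (j : 'I_n) : 0 < f j ->
  \sum_(i < n) (f i - drop_chip f j i) = 1.
Proof.
move=> pos_j; rewrite -(@sum_drop_chip n f j (fun _ => 1) pos_j).
by apply: eq_bigr => i _; rewrite muln1.
Qed.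

Lemma sum_drop_chipS n (f : nat -> nat) (j : 'I_n) : 0 < f j ->
  \sum_(i < n) drop_chip f j i + 1 = \sum_(i < n) f i.
Proof.
move=> pos_j; rewrite -(sum_drop_chip1 pos_j) -big_split.
by apply: eq_bigr => i _ /=; rewrite subnKC ?drop_chip_le.
Qed.

Lemma weight_trim k q T (f : nat -> nat) : T <= weight k q f ->
  exists y, (forall i, i <= k -> y i <= f i) /\ T <= weight k q y <= T + binom_le q k.
Proof.
move: {2}(\sum_(i < k.+1) f i) (leqnn (\sum_(i < k.+1) f i)) => n.
elim: n f => [|n IHn] f le_n le_T.
all: case: (leqP (weight k q f) (T + binom_le q k)) => [le_W | lt_W];
  first by exists f; split => //; apply/andP.
  by move: lt_W (weight_le_sum k q f); rewrite leqn0 in le_n; rewrite (eqP le_n); lia.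
have [j pos_j] : exists j : 'I_k.+1, 0 < f j.
  apply: sum_pos_exists; rewrite lt0n; apply/eqP => sum0.
  by move: lt_W (weight_le_sum k q f); rewrite sum0 muln0; lia.
have Wf : weight k q f = weight k q (drop_chip f j) + binom_le q (k - j).
  rewrite /weight (@sum_subnKC _ f (drop_chip f j) (fun i => binom_le q (k - i))).
    by rewrite (@sum_drop_chip _ f j (fun i => binom_le q (k - i))).
  by move=> i _; apply: drop_chip_le.
have [y [le_yf Wy]] : exists y, (forall i, i <= k -> y i <= drop_chip f j i) /\
    T <= weight k q y <= T + binom_le q k.
  apply: IHn; last by rewrite Wf in lt_W; have := leq_binom_le2r q (leq_subr j k); lia.
  by move: le_n; rewrite -(sum_drop_chipS pos_j) addn1.
by exists y; split => // i /le_yf /leq_trans; apply; apply: drop_chip_le.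
Qed.

(** * The endgame *)

Definition low_chips k (f : nat -> nat) := \sum_(i < k) f i.

Definition lies_left k (f : nat -> nat) := \sum_(i < k.+1) f i * (k - i).

Lemma low_chips_yes_state k f g : (forall i, i <= k -> g i <= f i) ->
  low_chips k (yes_state f g) <= low_chips k f.
Proof.
case: k => [|k] le_gf; first by rewrite /low_chips !big_ord0.
rewrite /low_chips !sum_muln1 (sum_yes_state _ _ _ (fun _ => 1)).
rewrite (@sum_subnKC _ f g (fun _ => 1)); last by move=> i /ltnW /le_gf.
by rewrite leq_add2l [X in _ <= X]big_ord_recr leq_addr.
Qed.

Lemma low_chips_no_state k f g : (forall i, i <= k -> g i <= f i) ->
  low_chips k (no_state f g) <= low_chips k f.
Proof.
case: k => [|k] le_gf; first by rewrite /low_chips !big_ord0.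
rewrite /low_chips !sum_muln1 (sum_no_state _ _ _ (fun _ => 1)).
rewrite (@sum_subnKC _ f g (fun _ => 1)); last by move=> i /ltnW /le_gf.
by rewrite addnC leq_add2r [X in _ <= X]big_ord_recr leq_addr.
Qed.

Lemma lies_left_yes_state k f g : (forall i, i <= k -> g i <= f i) ->
  lies_left k (yes_state f g) + \sum_(i < k) (f i - g i) = lies_left k f.
Proof.
move=> le_gf; rewrite /lies_left (sum_yes_state _ _ _ (fun i => k - i)).
rewrite (@sum_subnKC _ f g (fun i => k - i)); last by move=> i /le_gf.
rewrite -addnA; congr (_ + _).
rewrite big_ord_recr /= subnn muln0 addn0 -big_split.
by apply: eq_bigr => i _ /=; rewrite -mulnSr subnSK.
Qed.

Lemma lies_left_no_state k f g : (forall i, i <= k -> g i <= f i) ->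
  lies_left k (no_state f g) + \sum_(i < k) g i = lies_left k f.
Proof.
move=> le_gf; rewrite /lies_left (sum_no_state _ _ _ (fun i => k - i)).
rewrite (@sum_subnKC _ f g (fun i => k - i)); last by move=> i /le_gf.
rewrite -addnA addnC; congr (_ + _).
rewrite [RHS]big_ord_recr /= subnn muln0 addn0 -big_split.
by apply: eq_bigr => i _ /=; rewrite -mulnSr subnSK.
Qed.

Lemma lies_left_le k f : lies_left k f <= k * low_chips k f.
Proof.
rewrite /lies_left /low_chips big_ord_recr /= subnn muln0 addn0 big_distrr.
by apply: leq_sum => i _; rewrite mulnC leq_mul2r leq_subr orbT.
Qed.

Lemma low_weight_le k r (f : nat -> nat) :
  \sum_(i < k) f i * binom_le r (k - i) <= low_chips k f * binom_le r k.
Proof.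
rewrite /low_chips big_distrl; apply: leq_sum => i _.
by rewrite leq_mul2l leq_binom_le2r ?leq_subr ?orbT.
Qed.

Lemma low_yes_le k r f g : (forall i, i < k -> g i <= f i) ->
  low_yes k r f g <= low_chips k f * 2 ^ r.
Proof.
move=> le_gf; rewrite /low_chips big_distrl; apply: leq_sum => i _ /=.
rewrite -{2}(subnKC (le_gf i (ltn_ord i))) mulnDl.
by rewrite leq_add // leq_mul // binom_le_exp2.
Qed.

Lemma low_no_le k r f g : (forall i, i < k -> g i <= f i) ->
  low_no k r f g <= low_chips k f * 2 ^ r.
Proof.
move=> le_gf; rewrite /low_chips big_distrl; apply: leq_sum => i _ /=.
rewrite -{2}(subnK (le_gf i (ltn_ord i))) mulnDl.
by rewrite leq_add // leq_mul // binom_le_exp2.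
Qed.

(* With at most one chip below level [k], both answers get at most [2 ^ r] from the
   low levels, so the chips at level [k] can balance the split. *)
Lemma wins_few_low k r f : 2 ^ r <= weight k r f -> low_chips k f <= 1 -> wins k r f.
Proof.
elim: r f => [|r IHr] f W le1; first by rewrite /= -weight0.
have le_ff i : i < k -> f i <= f i by [].
have lowY := low_yes_le r le_ff; have lowN := low_no_le r le_ff.
have : low_chips k f * 2 ^ r <= 2 ^ r by rewrite -[leqRHS]mul1n leq_mul2r le1 orbT.
rewrite expnS (weightS_low _ le_ff) in W => le_low.
apply: (wins_split (h := 2 ^ r) le_ff); rewrite ?(weightS_low _ le_ff); try lia.
  move=> v le_v Wv; apply: IHr => //; apply: leq_trans le1.
  by apply: low_chips_yes_state; apply: upd_top_le.
move=> v le_v Wv; apply: IHr => //; apply: leq_trans le1.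
by apply: low_chips_no_state; apply: upd_top_le.
Qed.

Section Endgame.

Variables (k M R : nat).
Hypothesis exp2_ge : forall s, R <= s -> 2 * M * binom_le s k <= 2 ^ s.

Lemma wins_endgame r f : 2 ^ r <= weight k r f ->
  low_chips k f <= M -> R + lies_left k f <= r -> wins k r f.
Proof.
elim: r f => [|r IHr] f W leM le_lies; first by rewrite /= -weight0.
case: (leqP (low_chips k f) 1) => [le1 | gt1]; first exact: wins_few_low.
(* Put exactly one low chip on the no side: whatever the answer, some low chip
   moves up a level, so [lies_left] decreases. *)
have [j pos_j] := sum_pos_exists (ltnW gt1); set g := drop_chip f j.
have le_gf i : i < k -> g i <= f i by move=> _; apply: drop_chip_le.
have moved : \sum_(i < k) (f i - g i) = 1 := sum_drop_chip1 pos_j.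
have kept : \sum_(i < k) g i + 1 = low_chips k f := sum_drop_chipS pos_j.
have top : 2 ^ r <= f k.
  have le_low : M * binom_le r.+1 k <= 2 ^ r.
    rewrite -(leq_pmul2l (ltn0Sn 1)) mulnA -expnS exp2_ge //.
    exact: leq_trans (leq_addr _ _) le_lies.
  have : low_chips k f * binom_le r.+1 k <= M * binom_le r.+1 k.
    by rewrite leq_mul2r leM orbT.
  move: W; rewrite weight_top expnS; have := low_weight_le k r.+1 f; lia.
apply: (wins_split (h := 2 ^ r) le_gf); rewrite -?expnS //; try lia.
  move=> v le_v Wv; have le_upd := upd_top_le le_gf le_v.
  apply: IHr => //; first exact: leq_trans (low_chips_yes_state le_upd) leM.
  move: (lies_left_yes_state le_upd).
  by rewrite (@sum_upd_ord k g v (fun i x => f i - x)) moved; lia.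
move=> v le_v Wv; have le_upd := upd_top_le le_gf le_v.
apply: IHr => //; first exact: leq_trans (low_chips_no_state le_upd) leM.
by move: (lies_left_no_state le_upd); rewrite (@sum_upd_ord k g v (fun _ x => x)); lia.
Qed.

End Endgame.

(** * The ideal trajectory *)

(* [iter t spread x0] is [2 ^ t] times the state reached from [x0] after [t]
   rounds in which every level is split exactly in half. *)
Definition spread (f : nat -> nat) : nat -> nat :=
  fun i => f i + (if i is j.+1 then f j else 0).

Lemma iter_spreadS x0 t i : iter t.+1 spread x0 i =
  iter t spread x0 i + (if i is j.+1 then iter t spread x0 j else 0).
Proof. by []. Qed.

Lemma iter_spread_bin x0 t i :
  iter t spread x0 i = \sum_(j < i.+1) x0 j * 'C(t, i - j).
Proof.
elim: t i => [|t IHt] i.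
  rewrite big_ord_recr /= subnn bin0 muln1 big1 ?add0n // => j _.
  by rewrite bin0n subn_eq0 leqNgt ltn_ord muln0.
rewrite iter_spreadS; case: i => [|i]; first by rewrite !IHt !big_ord1 !bin0 addn0.
rewrite !IHt big_ord_recr /= subnn bin0 muln1.
rewrite [RHS]big_ord_recr /= subnn bin0 muln1 addnAC; congr (_ + _).
by rewrite -big_split; apply: eq_bigr => j _ /=; rewrite -mulnDr subSn ?binS // -ltnS.
Qed.

Lemma iter_spread_mono x0 t1 t2 i : t1 <= t2 -> iter t1 spread x0 i <= iter t2 spread x0 i.
Proof.
move=> /subnKC <-; elim: (t2 - t1) => [|d IHd]; rewrite ?addn0 // addnS.
exact: leq_trans IHd (leq_addr _ _).
Qed.

Lemma sum_le_iter_spread k (x : nat -> nat) : \sum_(j < k.+1) x j <= iter k spread x k.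
Proof. by rewrite iter_spread_bin; apply: leq_sum => j _; rewrite leq_pmulr ?bin_gt0 ?leq_subr. Qed.

Lemma weight_spread k r f : weight k r.+1 f = weight k r (spread f).
Proof.
rewrite (@weightS_yes_no _ _ _ (fun _ => 0)) // /weight -big_split.
by apply: eq_bigr => -[[|i] lt_ik] _ /=; rewrite -mulnDl !subn0 ?addn0 // addnC.
Qed.

Lemma weight_iter_spread k r t x0 :
  weight k (r + t) x0 = weight k r (iter t spread x0).
Proof. by elim: t r => [|t IHt] r; rewrite ?addn0 // addnS -addSn IHt weight_spread. Qed.

Lemma low_iter_spread_lt k R r0 x0 :
  weight k r0 x0 <= 2 ^ r0.+1 -> k * (2 ^ R.+2).+1 <= r0 -> R <= r0 ->
  \sum_(i < k) iter (r0 - R) spread x0 i < 2 ^ (r0 - R).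
Proof.
move=> W_ub large le_Rr0; set t := r0 - R.
case: k W_ub large => [|k] W_ub large; first by rewrite big_ord0 expn_gt0.
have r0E : r0 = R + t by rewrite subnKC.
have S1 : \sum_(i < k.+1) iter t spread x0 i <= weight k r0 x0.
  by rewrite r0E weight_iter_spread sum_le_weight.
have S2 := weight_succ_ge x0 large.
have : 2 ^ R.+1 * (2 * \sum_(i < k.+1) iter t spread x0 i) <= 2 ^ R.+1 * 2 ^ t.
  rewrite mulnA -expnSr -expnD addSn -r0E (leq_trans _ W_ub) // (leq_trans _ S2) //.
  by rewrite leq_mul2l S1 orbT.
have pos_t : 0 < 2 ^ t by rewrite expn_gt0.
by rewrite leq_pmul2l ?expn_gt0 //; lia.
Qed.

Lemma weight_le_iter_spread k t r (x0 : nat -> nat) : k <= t ->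
  weight k (t + r) x0 <= 2 ^ k * binom_le r k * iter t spread x0 k.
Proof.
move=> le_kt; rewrite iter_spread_bin big_distrr; apply: leq_sum => j _ /=.
rewrite mulnCA leq_mul2l; apply/orP; right; apply: leq_trans (binom_leD _ _ _) _.
have le_jk : k - j <= k := leq_subr j k.
rewrite mulnAC [_ * 'C(_, _)]mulnC leq_mul // ?leq_binom_le2r //.
rewrite mulnC (leq_trans (binom_le_bin (leq_trans le_jk le_kt))) //.
by rewrite leq_mul2r leq_exp2l ?le_jk ?orbT.
Qed.

Lemma iter_spread_top_ge k C R r0 x0 r :
  (forall s, R <= s -> 2 ^ k * C * binom_le s k ^ 2 <= 2 ^ s) ->
  2 ^ r0 <= weight k r0 x0 -> 2 ^ k * C * binom_le r0 k <= x0 k -> R <= r -> r <= r0 ->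
  2 ^ (r0 - r) * (C * binom_le r k) <= iter (r0 - r) spread x0 k.
Proof.
move=> exp2_ge W_lb top le_Rr le_rr0; set t := r0 - r.
have r0E : r0 = t + r by rewrite subnK.
have le_bl : binom_le r k <= binom_le r0 k by apply: leq_binom_le2l.
case: (leqP t k) => [le_tk | lt_kt].
  apply: leq_trans (iter_spread_mono x0 k (leq0n t)); apply: leq_trans top.
  by rewrite mulnA leq_mul // leq_mul // leq_exp2l.
have pos : 0 < 2 ^ k * binom_le r k by rewrite muln_gt0 expn_gt0 binom_le_gt0.
rewrite -(leq_pmul2l pos) (leq_trans _ (weight_le_iter_spread _ _ (ltnW lt_kt))) //.
rewrite -r0E (leq_trans _ W_lb) // r0E expnD.
have := exp2_ge r le_Rr; set B := binom_le r k; set P := 2 ^ t; nia.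
Qed.

Definition rounds_half a b := 2 * b <= a + 1 /\ a <= 2 * b + 1.

Definition tracks K x0 t (f : nat -> nat) := forall i, i < K ->
  2 ^ t * f i <= iter t spread x0 i + i.+1 * 2 ^ t /\
  iter t spread x0 i <= 2 ^ t * f i + i.+1 * 2 ^ t.

Lemma tracks0 K x0 : tracks K x0 0 x0.
Proof. by move=> i _; rewrite /= expn0 mul1n leq_addr. Qed.

Lemma tracks_step K x0 t f f' : tracks K x0 t f ->
  (forall i, i < K -> rounds_half (spread f i) (f' i)) -> tracks K x0 t.+1 f'.
Proof.
move=> tr half i lt_iK; have [a b] := tr i lt_iK; have [c d] := half i lt_iK.
rewrite iter_spreadS expnS; move: a b c d; rewrite [spread f i]/spread.
case: i lt_iK => [|j] lt_jK; set P := 2 ^ t; first by rewrite !addn0 => *; split; nia.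
by have [e g] := tr j (ltnW lt_jK); move: e g; rewrite -/P => *; split; nia.
Qed.

Lemma yes_state_halves f g i : (forall j, j <= i -> g j = f j %/ 2) ->
  rounds_half (spread f i) (yes_state f g i).
Proof. by case: i => [|i] half; rewrite /rounds_half /spread /= !half //; split; lia. Qed.

Lemma no_state_halves f g i : (forall j, j <= i -> g j = f j %/ 2) ->
  rounds_half (spread f i) (no_state f g i).
Proof. by case: i => [|i] half; rewrite /rounds_half /spread /= !half //; split; lia. Qed.

Lemma low_halves k r f g : (forall i, i < k -> g i = f i %/ 2) ->
  low_yes k r f g <= low_no k r f g <= low_yes k r f g + \sum_(i < k) 'C(r, k - i).
Proof.
move=> half; rewrite -big_split; apply/andP; split; apply: leq_sum => i _ /=;
  have lt_ik := ltn_ord i; rewrite -(subnSK lt_ik) binom_le_recr half //;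
  set B := binom_le r _; set C := 'C(r, _); nia.
Qed.

(** * The strategy *)

Section Strategy.

Variables (k M R2 R1 : nat).
Hypothesis le_sum_M : \sum_(i < k) i.+1 <= M.
Hypothesis exp2_ge_R2 : forall s, R2 <= s -> 2 * M * binom_le s k <= 2 ^ s.
Hypothesis le_R2_R1 : R2 + k * M <= R1.
Hypothesis exp2_ge_R1 : forall s, R1 <= s -> 2 ^ k * (M + 2) * binom_le s k ^ 2 <= 2 ^ s.

Lemma tracks_low_le x0 t f (c : nat -> nat) c0 : tracks k x0 t f ->
  (forall i, i < k -> c i <= c0) ->
  2 ^ t * \sum_(i < k) f i * c i <= \sum_(i < k) iter t spread x0 i * c i + 2 ^ t * (M * c0).
Proof.
move=> tr le_c; rewrite big_distrr /=.
apply: (@leq_trans (\sum_(i < k) (iter t spread x0 i + i.+1 * 2 ^ t) * c i)).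
  by apply: leq_sum => i _; rewrite mulnA leq_mul2r (tr i (ltn_ord i)).1 orbT.
rewrite (eq_bigr _ (fun i _ => mulnDl _ _ _)) big_split leq_add2l /=.
apply: (@leq_trans (\sum_(i < k) i.+1 * 2 ^ t * c0)).
  by apply: leq_sum => i _; rewrite leq_mul2l le_c ?orbT.
by rewrite -!big_distrl /= mulnCA mulnA leq_mul2r leq_mul2r le_sum_M !orbT.
Qed.

Section Phase2.

Variables (r0 : nat) (x0 : nat -> nat).
Hypothesis W0_lb : 2 ^ r0 <= weight k r0 x0.
Hypothesis W0_ub : weight k r0 x0 <= 2 ^ r0.+1.
Hypothesis top0 : 2 ^ k * (M + 2) * binom_le r0 k <= x0 k.
Hypothesis large_r0 : k * (2 ^ R1.+2).+1 <= r0.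

Lemma wins_phase2_end f : R1 <= r0 -> tracks k x0 (r0 - R1) f ->
  weight k r0 x0 + 1 <= 2 ^ (r0 - R1) * (weight k R1 f + 1) -> wins k R1 f.
Proof.
move=> le_R1r0 tr W; set t := r0 - R1 in tr W.
have pos_t : 0 < 2 ^ t by rewrite expn_gt0.
have W_lb : 2 ^ R1 <= weight k R1 f.
  have : 2 ^ t * 2 ^ R1 < 2 ^ t * (weight k R1 f + 1).
    by rewrite -expnD subnK //; lia.
  by rewrite ltn_pmul2l // addn1 ltnS.
have few := low_iter_spread_lt W0_ub large_r0 le_R1r0; rewrite -/t in few.
have le_M : low_chips k f <= M.
  have := tracks_low_le (c := fun _ => 1) tr (fun _ _ => leqnn 1).
  rewrite /low_chips -!sum_muln1 !muln1 -/t => le_tM.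
  have : 2 ^ t * \sum_(i < k) f i < 2 ^ t * M.+1 by rewrite mulnS; lia.
  by rewrite ltn_pmul2l.
apply: (wins_endgame exp2_ge_R2 W_lb le_M); apply: leq_trans le_R2_R1.
by rewrite leq_add2l (leq_trans (lies_left_le k f)) // leq_mul2l le_M orbT.
Qed.

(* The low levels and the weight both follow the ideal trajectory, hence so does
   level [k], whose ideal value is large. *)
Lemma phase2_top_ge r f : R1 <= r.+1 -> r < r0 -> tracks k x0 (r0 - r.+1) f ->
  weight k r0 x0 + 1 <= 2 ^ (r0 - r.+1) * (weight k r.+1 f + 1) ->
  binom_le r.+1 k <= f k.
Proof.
move=> le_R1r lt_rr0 tr W; set t := r0 - r.+1 in tr W.
have ideal_top := iter_spread_top_ge exp2_ge_R1 W0_lb top0 le_R1r lt_rr0.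
have ideal_W : weight k r0 x0 =
    \sum_(i < k) iter t spread x0 i * binom_le r.+1 (k - i) + iter t spread x0 k.
  by rewrite -weight_top -weight_iter_spread subnKC.
have low := tracks_low_le (c := fun i => binom_le r.+1 (k - i)) (c0 := binom_le r.+1 k) tr
  (fun i _ => leq_binom_le2r _ (leq_subr i k)).
rewrite [weight k r.+1 f]weight_top -/t in W ideal_top.
have : 2 ^ t * (2 * binom_le r.+1 k) < 2 ^ t * (f k + 1) by lia.
by rewrite ltn_pmul2l ?expn_gt0 //; have := binom_le_gt0 r.+1 k; lia.
Qed.

(* The [+ 1] absorbs the rounding down of [weight %/ 2] at every step. *)
Lemma wins_phase2 d f : R1 + d <= r0 -> tracks k x0 (r0 - (R1 + d)) f ->
  weight k r0 x0 + 1 <= 2 ^ (r0 - (R1 + d)) * (weight k (R1 + d) f + 1) ->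
  wins k (R1 + d) f.
Proof.
elim: d f => [|d IHd] f; first by rewrite addn0; exact: wins_phase2_end.
rewrite addnS; set r := R1 + d => lt_rr0 tr W; set t := r0 - r.+1 in tr W.
have tE : r0 - r = t.+1 by rewrite subnSK.
have top : binom_le r.+1 k <= f k.
  exact: phase2_top_ge (leq_trans (leq_addr d R1) (leqnSn _)) lt_rr0 tr W.
pose g i := f i %/ 2; have le_gf i : i < k -> g i <= f i by move=> _; apply: leq_div.
have /andP[lowY lowN] := @low_halves k r f g (fun i _ => erefl).
have := sum_bin_rev r k; have := leq_binom_le2l k (leqnSn r).
have W1E := weightS_low r le_gf.
have next_W w : weight k r.+1 f %/ 2 <= w -> weight k r0 x0 + 1 <= 2 ^ (r0 - r) * (w + 1).
  by rewrite tE expnS => le_w; apply: leq_trans W _; nia.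
move=> le_B Cs; apply: (wins_split (h := weight k r.+1 f %/ 2) le_gf); try lia.
  move=> v le_v Wv; apply: IHd; rewrite ?next_W //; first exact: ltnW.
  rewrite tE; apply: (tracks_step tr) => i lt_ik; apply: yes_state_halves => j le_ji.
  by rewrite /upd ltn_eqF // (leq_ltn_trans le_ji lt_ik).
move=> v le_v Wv; apply: IHd; rewrite ?next_W //; first exact: ltnW.
rewrite tE; apply: (tracks_step tr) => i lt_ik; apply: no_state_halves => j le_ji.
by rewrite /upd ltn_eqF // (leq_ltn_trans le_ji lt_ik).
Qed.

End Phase2.
Section Phase1.

Variables (q : nat) (f0 : nat -> nat).
Let W := weight k q f0.
Let B := binom_le q k.
Hypothesis W_lb : 2 ^ q + 2 ^ k * B <= W.
Hypothesis W_ub : W + 2 ^ k * B <= 2 ^ q.+1.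
Hypothesis exp2_ge_q : B * 2 ^ k * (2 ^ k * (M + 2) * B + k.+1) <= 2 ^ q.
Hypothesis le_k_q : k <= q.
Hypothesis le_R1_q : R1 <= q - k.
Hypothesis large_q : k * (2 ^ R1.+2).+1 <= q - k.

Lemma wins_phase1_end f : tracks k.+1 f0 k f ->
  W + B <= 2 ^ k * (weight k (q - k) f + B) ->
  2 ^ k * weight k (q - k) f + B <= W + 2 ^ k * B ->
  wins k (q - k) f.
Proof.
move=> tr; have := large_q; have := le_R1_q; set r0 := q - k => le_R1 large lb ub.
have qE : 2 ^ q = 2 ^ k * 2 ^ r0 by rewrite -expnD subnKC.
have pos_k : 0 < 2 ^ k by rewrite expn_gt0.
have W0_lb : 2 ^ r0 <= weight k r0 f by rewrite -(leq_pmul2l pos_k) -qE; lia.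
have W0_ub : weight k r0 f <= 2 ^ r0.+1.
  by rewrite -(leq_pmul2l pos_k) expnS mulnCA -qE; have := W_ub; rewrite expnS; lia.
have top : 2 ^ k * (M + 2) * binom_le r0 k <= f k.
  apply: leq_trans (_ : 2 ^ k * (M + 2) * B <= f k).
    by rewrite leq_mul2l leq_binom_le2l ?leq_subr ?orbT.
  have pos : 0 < B * 2 ^ k by rewrite muln_gt0 binom_le_gt0 expn_gt0.
  rewrite -(leq_add2r k.+1) -(leq_pmul2l pos) (leq_trans exp2_ge_q) //.
  have [_ tr_k] := tr k (ltnSn k).
  have : B * \sum_(j < k.+1) f0 j <= B * iter k spread f0 k.
    by rewrite leq_mul2l sum_le_iter_spread orbT.
  have : B * iter k spread f0 k <= B * (2 ^ k * f k + k.+1 * 2 ^ k).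
    by rewrite leq_mul2l tr_k orbT.
  have := weight_le_sum k q f0; rewrite -/W -/B; lia.
have := @wins_phase2 r0 f W0_lb W0_ub top large (r0 - R1) f.
by rewrite subnKC // subnn expn0 mul1n; apply => //; apply: tracks0.
Qed.

Lemma wins_phase1 n t f : t + n = k -> tracks k.+1 f0 t f ->
  W + B <= 2 ^ t * (weight k (q - t) f + B) ->
  2 ^ t * weight k (q - t) f + B <= W + 2 ^ t * B ->
  wins k (q - t) f.
Proof.
elim: n t f => [|n IHn] t f; first by rewrite addn0 => ->; apply: wins_phase1_end.
move=> tnE tr; have lt_tk : t < k by rewrite -tnE -addn1 leq_add2l.
rewrite -subnSK ?(leq_trans lt_tk) //; set r := q - t.+1 => lb ub.
pose g i := f i %/ 2; pose v := f k %/ 2.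
have le_gf i : i < k -> g i <= f i by move=> _; apply: leq_div.
have halves j : j <= k -> upd g k v j = f j %/ 2 by rewrite /upd; case: eqP => [->|].
have /andP[lowY lowN] := @low_halves k r f g (fun i _ => erefl).
have le_B : binom_le r k <= B by apply: leq_binom_le2l; apply: leq_subr.
have := sum_bin_rev r k; have W1E := weightS_low r le_gf.
(* Halving every level unbalances the answers by at most [binom_le r k <= B]. *)
have next w : 2 * w <= weight k r.+1 f + B /\ weight k r.+1 f <= 2 * w + B ->
    W + B <= 2 ^ t.+1 * (w + B) /\ 2 ^ t.+1 * w + B <= W + 2 ^ t.+1 * B.
  by move: lb ub; rewrite expnS; set P := 2 ^ t => ? ? [? ?]; split; nia.
have tnE' : t.+1 + n = k by rewrite addSnnS.
move=> Cs; apply: (wins_step (v := v) le_gf (leq_div _ _)).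
  have /next[lbY ubY] : 2 * weight k r (yes_state f (upd g k v)) <= weight k r.+1 f + B /\
      weight k r.+1 f <= 2 * weight k r (yes_state f (upd g k v)) + B.
    by rewrite weight_yes_state low_yes_upd /upd eqxx; lia.
  apply: IHn tnE' _ lbY ubY; apply: (tracks_step tr) => i lt_ik.
  by apply: yes_state_halves => j le_ji; rewrite halves // (leq_trans le_ji).
have /next[lbN ubN] : 2 * weight k r (no_state f (upd g k v)) <= weight k r.+1 f + B /\
    weight k r.+1 f <= 2 * weight k r (no_state f (upd g k v)) + B.
  by rewrite weight_no_state low_no_upd /upd eqxx; lia.
apply: IHn tnE' _ lbN ubN; apply: (tracks_step tr) => i lt_ik.
by apply: no_state_halves => j le_ji; rewrite halves // (leq_trans le_ji).
Qed.

End Phase1.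

Lemma wins_weight_window q f : k <= q -> R1 <= q - k -> k * (2 ^ R1.+2).+1 <= q - k ->
  binom_le q k * 2 ^ k * (2 ^ k * (M + 2) * binom_le q k + k.+1) <= 2 ^ q ->
  2 ^ q + 2 ^ k * binom_le q k <= weight k q f ->
  weight k q f + 2 ^ k * binom_le q k <= 2 ^ q.+1 ->
  wins k q f.
Proof.
move=> le_kq le_R1 large exp2_ge W_lb W_ub.
have := @wins_phase1 q f W_lb W_ub exp2_ge le_kq le_R1 large k 0 f (add0n k) (@tracks0 k.+1 f).
by rewrite subn0 expn0 !mul1n; apply.
Qed.

End Strategy.

Lemma strategy_constants k : exists M R2 R1, [/\ \sum_(i < k) i.+1 <= M,
  forall s, R2 <= s -> 2 * M * binom_le s k <= 2 ^ s, R2 + k * M <= R1 &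
  forall s, R1 <= s -> 2 ^ k * (M + 2) * binom_le s k ^ 2 <= 2 ^ s].
Proof.
have le_sum : \sum_(i < k) i.+1 <= k * k.
  apply: (@leq_trans (\sum_(i < k) k)); first by apply: leq_sum => i _; apply: ltn_ord.
  by rewrite sum_nat_const card_ord.
have [R2 exp2_ge_R2] := exp2_dominates_binom_le (2 * (k * k)) k.
have [R1 exp2_ge_R1] := exp2_dominates_binom_le (2 ^ k * (k * k + 2)) k.
exists (k * k), R2, (R1 + (R2 + k * (k * k))); split; rewrite ?leq_addl // => s le_s.
  apply: leq_trans (exp2_ge_R2 s le_s).
  by rewrite leq_mul2l expnS expn1 leq_pmulr ?binom_le_gt0 ?orbT.
by apply: exp2_ge_R1; apply: leq_trans le_s; apply: leq_addr.
Qed.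

Theorem theorem8 : forall k : nat, exists c1 qstar : nat,
  forall q : nat, qstar <= q ->
  forall x : state k, 2 ^ q + c1 * 'C(q, k) <= wt q x -> paul_wins q x.
Proof.
move=> k; have [M [R2 [R1 [le_sum_M exp2_ge_R2 le_R2_R1 exp2_ge_R1]]]] := strategy_constants k.
(* [Q] makes [binom_le q k ^ 2] negligible against [2 ^ q], as the hypotheses of
   [wins_weight_window] require. *)
have [Q exp2_ge_Q] := exp2_dominates_binom_le (2 ^ k * (2 ^ k * (M + 2) + k.+1) + 2 ^ k.+1 + 1) k.
exists (4 ^ k), (Q + k + R1 + k * (2 ^ R1.+2).+1) => q le_q x; rewrite wt_weight => wt_x.
have le_kq : k <= q by lia.
have /exp2_ge_Q : Q <= q by lia.
have B_le := binom_le_bin le_kq; have := binom_le_gt0 q k; set B := binom_le q k => B_pos exp2_ge.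
have T_le : 2 ^ q + 2 ^ k * B <= weight k q (fun i => x (inord i)).
  by apply: leq_trans wt_x; rewrite leq_add2l -[4]/(2 * 2) expnMn -mulnA leq_mul2l B_le orbT.
have [y [le_yx /andP[W_lb W_ub]]] := weight_trim T_le.
apply: paul_wins_of_wins; apply: (wins_mono le_yx).
have BB : B <= B ^ 2 by rewrite expnS expn1 leq_pmulr.
apply: (wins_weight_window le_sum_M exp2_ge_R2 le_R2_R1 exp2_ge_R1) => //; rewrite -/B; try lia.
  by move: exp2_ge BB; rewrite expnS; set P := 2 ^ k; set C := M + 2; nia.
by move: exp2_ge BB W_ub; rewrite !expnS; set P := 2 ^ k; set C := M + 2; nia.
Qed.
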